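(* Let $a,b>0$ and let $p$ be a point of the flat Klein bottle $K_{a,b}$. Let $\sigma$ be the union of the two main geodesics of $K_{a,b}$, and put $\lambda=2d(p,\sigma)/b$; then $\lambda\in[0,1/2]$. <ol> <li>Assume $b<2a$. If $\lambda=0$, then $\#F_p=\#F_p^4=1$. If $\lambda\neq 0$, then $\#F_p=\#F_p^3=2$.</li> <li>Assume $b=2a$. If $\lambda=0$ or $\lambda=1/2$, then $\#F_p=\#F_p^4=1$. Otherwise $\#F_p=\#F_p^3=2$.</li> <li>Assume $b>2a$, and put $\lambda_0=\frac12-\sqrt{\frac14-\frac{a^2}{b^2}}$. <ol> <li>If $\lambda=0$, then $\#F_p=\#F_p^4=1$.</li> <li>If $0<\lambda<\lambda_0$, then $\#F_p=\#F_p^3=2$.</li> <li>If $\lambda=\lambda_0$, then $\#F_p=\#F_p^4=1$.</li> <li>If $\lambda_0<\lambda<1/2$, then $\#F_p=\#F_p^3=1$.</li> <li>If $\lambda=1/2$, then $\#F_p=\#F_p^3=2$.</li> </ol> </li> </ol>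
   Context: For $a,b>0$, $K_{a,b}$ is the flat Klein bottle obtained from an $a\times b$ rectangle by two identifications: the sides of length $a$ are identified by translation, and the sides of length $b$ are identified by the point symmetry about the center of the rectangle. Equivalently, $K_{a,b}=\mathbb{R}^2/G$, where $G$ is generated by $(x,y)\mapsto(x,y+b)$ and $(x,y)\mapsto(x+a,-y)$. It carries the induced intrinsic distance $d$. The $a$-direction is called horizontal. The horizontal closed geodesics all have length $2a$, except two of length $a$, which are called the main geodesics: <ul> <li>the one coming from the $a$-long sides of the rectangle;</li> <li>the one coming from the mid-height horizontal segment of the rectangle.</li> </ul> In the quotient model, the main geodesics are the images of the lines $y=nb/2$, $n\in\mathbb{Z}$. For a point $p$, $F_p$ is the set of points at maximal distance from $p$. A segment is a shortest path. $F_p^n$ is the set of farthest points from $p$ joined to $p$ by exactly $n$ distinct segments. $\#$ denotes cardinality. *)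

From Stdlib Require Import Reals Lra ZArith List.
Open Scope R_scope.

(** The flat Klein bottle K_{a,b} = R^2 / G, where G is generated by
    (x,y) |-> (x, y+b) and (x,y) |-> (x+a, -y).  Every element of G is
    (x,y) |-> (x + m a, (-1)^m y + n b) for unique m n : Z. *)
Definition sgnZ (m : Z) (y : R) : R := if Z.even m then y else - y.

Definition actK (a b : R) (m n : Z) (u : R * R) : R * R :=
  (fst u + IZR m * a, sgnZ m (snd u) + IZR n * b).

Definition orbitK (a b : R) (v y : R * R) : Prop :=
  exists m n : Z, y = actK a b m n v.

(** Points of K_{a,b} are represented by points of R^2 (their lifts);
    two representatives denote the same point iff they are G-equivalent. *)
Definition equivK (a b : R) (u v : R * R) : Prop := orbitK a b u v.

Definition edist (u v : R * R) : R :=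
  sqrt ((fst u - fst v) ^ 2 + (snd u - snd v) ^ 2).

(** r is the intrinsic distance d([u],[v]) in K_{a,b}: the minimum of the
    Euclidean distances from u to the lifts of [v]. *)
Definition is_Kdist (a b : R) (u v : R * R) (r : R) : Prop :=
  (exists y, orbitK a b v y /\ edist u y = r) /\
  (forall y, orbitK a b v y -> r <= edist u y).

Definition is_glb (E : R -> Prop) (r : R) : Prop :=
  (forall x, E x -> r <= x) /\ (forall s, (forall x, E x -> s <= x) -> s <= r).

(** sigma = union of the two main geodesics = image of the lines y = n b/2. *)
Definition on_sigma (b : R) (q : R * R) : Prop :=
  exists n : Z, snd q = IZR n * b / 2.

Definition is_dsigma (a b : R) (p : R * R) (r : R) : Prop :=
  is_glb (fun x => exists q, on_sigma b q /\ is_Kdist a b p q x) r.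

Definition farthest (a b : R) (p q : R * R) : Prop :=
  exists r, is_Kdist a b p q r /\
    (forall q' r', is_Kdist a b p q' r' -> r' <= r).

Definition has_card {A : Type} (P : A -> Prop) (k : nat) : Prop :=
  exists l : list A, NoDup l /\ length l = k /\ (forall x, P x <-> In x l).

(** p and q are joined by exactly k distinct segments: the segments from p
    to q are the projections of the straight segments from the lift p to
    the lifts y of q realizing the distance d(p,q). *)
Definition nsegs (a b : R) (p q : R * R) (k : nat) : Prop :=
  exists r, is_Kdist a b p q r /\
    has_card (fun y => orbitK a b q y /\ edist p y = r) k.

Definition Fpk (a b : R) (p : R * R) (k : nat) (q : R * R) : Prop :=
  farthest a b p q /\ nsegs a b p q k.

(** The set of points of K_{a,b} whose lifts satisfy P (assumed
    G-invariant) has exactly N elements: there are N pairwise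
    non-equivalent representatives, covering every lift satisfying P. *)
Definition count_classes (a b : R) (P : R * R -> Prop) (N : nat) : Prop :=
  exists l : list (R * R),
    length l = N /\
    (forall u, In u l -> P u) /\
    ForallOrdPairs (fun u v => ~ equivK a b u v) l /\
    (forall u, P u -> exists v, In v l /\ equivK a b u v).

Definition Fcase (a b : R) (p : R * R) (N k : nat) : Prop :=
  count_classes a b (farthest a b p) N /\ count_classes a b (Fpk a b p k) N.

From Stdlib Require Import Reals Lra Psatz ZArith List.
Open Scope R_scope.

(* An isometry of the plane normalizing G and preserving the lines y = n b/2 brings
   p to (0, y0) with 0 <= y0 <= b/4; then d(p, sigma) = y0 and lambda = 2 y0 / b.
   The fundamental rectangle [0,a] x [y0, y0+b] is cut into triangles whose vertices
   are lifts of p.  If q lies in such a triangle, with circumcentre V and circumradius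
   rho, some vertex is at squared distance at most rho^2 - |q - V|^2 from q; so the
   farthest points are the circumcentres of largest radius, and the segments to them
   are the radii ending at lifts of p.  The right triangulation depends on the sign of
   a^2 - 2 y0 (b - 2 y0) = a^2 - b^2 lambda (1 - lambda), whence the thresholds
   b = 2a and lambda_0. *)

Definition d2 (u v : R * R) : R := (fst u - fst v) ^ 2 + (snd u - snd v) ^ 2.

Lemma edistE u v : edist u v = sqrt (d2 u v).
Proof. reflexivity. Qed.

Lemma d2_ge0 u v : 0 <= d2 u v.
Proof.
  unfold d2; pose proof (pow2_ge_0 (fst u - fst v)); pose proof (pow2_ge_0 (snd u - snd v)).
  lra.
Qed.

Lemma d2_sym u v : d2 u v = d2 v u.
Proof. unfold d2; ring. Qed.

Lemma d2_eq0 u v : d2 u v = 0 -> u = v.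
Proof.
  destruct u as [x y], v as [x' y']; unfold d2; simpl; intros E.
  pose proof (pow2_ge_0 (x - x')); pose proof (pow2_ge_0 (y - y')).
  f_equal; nra.
Qed.

Lemma edist_le r u v : 0 <= r -> edist u v <= r <-> d2 u v <= r ^ 2.
Proof.
  intros Hr; rewrite edistE; pose proof (d2_ge0 u v) as D; split; intros H.
  - pose proof (sqrt_pos (d2 u v)); rewrite <- (pow2_sqrt (d2 u v)); nra.
  - rewrite <- (sqrt_pow2 r Hr); now apply sqrt_le_1_alt.
Qed.

Lemma edist_ge r u v : 0 <= r -> r <= edist u v <-> r ^ 2 <= d2 u v.
Proof.
  intros Hr; rewrite edistE; pose proof (d2_ge0 u v) as D; split; intros H.
  - rewrite <- (pow2_sqrt (d2 u v)); nra.
  - rewrite <- (sqrt_pow2 r Hr); apply sqrt_le_1_alt; lra.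
Qed.

Lemma edist_eq r u v : 0 <= r -> edist u v = r <-> d2 u v = r ^ 2.
Proof.
  intros Hr; split; intros H.
  - subst r; rewrite edistE, pow2_sqrt; [reflexivity | apply d2_ge0].
  - rewrite edistE, H; now apply sqrt_pow2.
Qed.

Lemma no_integer_in_01 (m : Z) : 0 < IZR m < 1 -> False.
Proof.
  intros [H0 H1]; apply lt_IZR in H0; apply lt_IZR in H1; lia.
Qed.

Lemma exists_floor (c d : R) : 0 < d -> exists k : Z, 0 <= c - IZR k * d < d.
Proof.
  intros Hd; destruct (archimed (c / d)) as [H1 H2].
  exists (up (c / d) - 1)%Z; rewrite minus_IZR.
  assert (E : c = c / d * d) by (field; lra).
  rewrite E at 1 3; split; nra.
Qed.

Lemma sqr_le_of_abs_le c e : 0 <= c -> c <= e \/ e <= - c -> c ^ 2 <= e ^ 2.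
Proof. intros Hc [H|H]; nra. Qed.

Lemma sqr_lt_of_abs_lt c e : 0 <= c -> c < e \/ e < - c -> c ^ 2 < e ^ 2.
Proof. intros Hc [H|H]; nra. Qed.

Lemma sqr_shift_ge (c d : R) (j : Z) : 0 < d -> 0 <= c <= d / 2 ->
  c ^ 2 <= (c + IZR j * d) ^ 2 /\
  ((c + IZR j * d) ^ 2 = c ^ 2 -> j = 0%Z \/ (j = (-1)%Z /\ c = d / 2)).
Proof.
  intros Hd Hc.
  destruct (Z.lt_trichotomy j 0) as [Hj|[->|Hj]].
  - destruct (Z.eq_dec j (-1)) as [->|Hj1].
    + split; [nra|]; intros E; right; split; [reflexivity | nra].
    + assert (IZR j <= -2) by (apply IZR_le; lia).
      assert (c ^ 2 < (c + IZR j * d) ^ 2) by (apply sqr_lt_of_abs_lt; nra).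
      split; [lra|]; intros E; lra.
  - split; [nra|]; intros _; now left.
  - assert (1 <= IZR j) by (apply IZR_le; lia).
    assert (c ^ 2 < (c + IZR j * d) ^ 2) by (apply sqr_lt_of_abs_lt; nra).
    split; [lra|]; intros E; lra.
Qed.

Lemma actK_comp a b m n m' n' v :
  actK a b m n (actK a b m' n' v) =
  actK a b (m + m') (if Z.even m then n' + n else - n' + n) v.
Proof.
  destruct v as [x y]; unfold actK, sgnZ; simpl; rewrite Z.even_add.
  destruct (Z.even m), (Z.even m'); simpl; f_equal;
    rewrite ?plus_IZR, ?opp_IZR; ring.
Qed.

Lemma actK_0 a b v : actK a b 0 0 v = v.
Proof. destruct v; unfold actK, sgnZ; simpl; f_equal; ring. Qed.

Lemma actK_even a b k n u :
  actK a b (2 * k) n u = (fst u + IZR k * (2 * a), snd u + IZR n * b).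
Proof. unfold actK, sgnZ; rewrite Z.even_even, mult_IZR; f_equal; ring. Qed.

Lemma actK_odd a b k n u :
  actK a b (2 * k + 1) n u = (fst u + a + IZR k * (2 * a), - snd u + IZR n * b).
Proof.
  unfold actK, sgnZ; rewrite Z.even_odd, plus_IZR, mult_IZR; f_equal; ring.
Qed.

Lemma actK_inj a b m n m' n' v : 0 < a -> 0 < b ->
  actK a b m n v = actK a b m' n' v -> m = m' /\ n = n'.
Proof.
  intros Ha Hb E; unfold actK in E; injection E as E1 E2.
  assert (Em : m = m') by (apply eq_IZR, (Rmult_eq_reg_r a); lra).
  subst m'; split; [reflexivity|].
  apply eq_IZR, (Rmult_eq_reg_r b); lra.
Qed.

Lemma d2_actK a b m n u v : d2 (actK a b m n u) (actK a b m n v) = d2 u v.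
Proof. destruct u, v; unfold d2, actK, sgnZ; simpl; destruct (Z.even m); ring. Qed.

Lemma orbitK_act a b v m n : orbitK a b v (actK a b m n v).
Proof. exists m, n; reflexivity. Qed.

Lemma orbitK_refl a b v : orbitK a b v v.
Proof. exists 0%Z, 0%Z; now rewrite actK_0. Qed.

Lemma orbitK_trans a b u v w : orbitK a b u v -> orbitK a b v w -> orbitK a b u w.
Proof. intros [m [n ->]] [m' [n' ->]]; rewrite actK_comp; apply orbitK_act. Qed.

Lemma orbitK_sym a b u v : orbitK a b u v -> orbitK a b v u.
Proof.
  intros [m [n ->]].
  exists (- m)%Z, (if Z.even m then - n else n)%Z.
  rewrite actK_comp, Z.even_opp, Z.add_opp_diag_l.
  destruct (Z.even m); rewrite ?Z.add_opp_diag_r, ?Z.add_opp_diag_l;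
    now rewrite actK_0.
Qed.

Lemma not_orbitK_shift_fst a b u v : 0 < a -> 0 < fst v - fst u < a -> ~ orbitK a b u v.
Proof.
  intros Ha Hv [m [n ->]]; unfold actK in Hv; simpl in Hv.
  apply (no_integer_in_01 m); split; nra.
Qed.

Lemma not_orbitK_shift_snd a b u v : 0 < a -> 0 < b ->
  fst v = fst u -> 0 < snd v - snd u < b -> ~ orbitK a b u v.
Proof.
  intros Ha Hb Hx Hy [m [n ->]]; unfold actK, sgnZ in Hx, Hy; simpl in Hx, Hy.
  assert (m = 0%Z) as -> by (apply eq_IZR; nra).
  simpl in Hy; apply (no_integer_in_01 n); split; nra.
Qed.

Lemma has_card_bij {A B : Type} (f : A -> B) (g : B -> A) (P : A -> Prop) (P' : B -> Prop) k :
  (forall u, g (f u) = u) -> (forall w, f (g w) = w) ->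
  (forall w, P' w <-> P (g w)) -> has_card P k -> has_card P' k.
Proof.
  intros gf fg HP [l [Hl [Hk Hmem]]].
  exists (map f l); split; [|split].
  - apply NoDup_map_NoDup_ForallPairs; [|exact Hl].
    intros x y _ _ Exy; now rewrite <- (gf x), <- (gf y), Exy.
  - now rewrite length_map.
  - intros w; rewrite HP, Hmem; split; intros H.
    + rewrite <- (fg w); now apply in_map.
    + apply in_map_iff in H as [x [<- Hx]]; now rewrite gf.
Qed.

Lemma ForallOrdPairs_map {A B : Type} (R1 : A -> A -> Prop) (R2 : B -> B -> Prop) (h : A -> B) l :
  (forall x y, R1 x y -> R2 (h x) (h y)) -> ForallOrdPairs R1 l -> ForallOrdPairs R2 (map h l).
Proof.
  intros HR H; induction H; simpl; constructor; auto.
  apply Forall_map; eapply Forall_impl; [|eassumption]; auto.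
Qed.

Lemma count_classes_map a b (h h' : R * R -> R * R) (P P' : R * R -> Prop) N :
  (forall u, h (h' u) = u) -> (forall u v, orbitK a b (h u) (h v) <-> orbitK a b u v) ->
  (forall u, P u -> P' (h u)) -> (forall u, P' u -> P (h' u)) ->
  count_classes a b P N -> count_classes a b P' N.
Proof.
  intros hh' Horb HP HP' [l [Hl [Hin [Hne Hcov]]]].
  exists (map h l); split; [|split; [|split]].
  - now rewrite length_map.
  - intros u Hu; apply in_map_iff in Hu as [x [<- Hx]]; auto.
  - apply (ForallOrdPairs_map (fun u v => ~ equivK a b u v)); [|exact Hne].
    intros x y Hxy E; apply Hxy; now apply Horb.
  - intros u Hu; destruct (Hcov (h' u) (HP' u Hu)) as [v [Hv E]].
    exists (h v); split; [now apply in_map|].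
    unfold equivK; rewrite <- (hh' u); now apply Horb.
Qed.

(** * Symmetries of K_{a,b} *)

Record Ksymmetry (a b : R) (f g : R * R -> R * R) : Prop := {
  sym_gf : forall u, g (f u) = u;
  sym_fg : forall u, f (g u) = u;
  sym_edist : forall u v, edist (f u) (f v) = edist u v;
  sym_orbitK : forall u v, orbitK a b (f u) (f v) <-> orbitK a b u v;
  sym_on_sigma : forall q, on_sigma b (f q) <-> on_sigma b q }.

Section KSymmetry.
Variables (a b : R) (f g : R * R -> R * R).
Hypothesis S : Ksymmetry a b f g.

Let gf := sym_gf _ _ _ _ S.
Let fg := sym_fg _ _ _ _ S.
Let edist_f := sym_edist _ _ _ _ S.
Let orbitK_f := sym_orbitK _ _ _ _ S.

Lemma orbitK_Ksym_inv u v : orbitK a b (g u) (g v) <-> orbitK a b u v.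
Proof. now rewrite <- orbitK_f, !fg. Qed.

Lemma is_Kdist_Ksym u v r : is_Kdist a b (f u) (f v) r <-> is_Kdist a b u v r.
Proof.
  split; intros [[w [Ow Dw]] Hmin]; split.
  - exists (g w); rewrite <- orbitK_f, <- edist_f, fg; auto.
  - intros w' Ow'; rewrite <- edist_f; apply Hmin; now apply orbitK_f.
  - exists (f w); rewrite orbitK_f, edist_f; auto.
  - intros w' Ow'; rewrite <- (fg w'), edist_f; apply Hmin.
    now rewrite <- orbitK_f, fg.
Qed.

Lemma farthest_Ksym p q : farthest a b (f p) (f q) <-> farthest a b p q.
Proof.
  split; intros [r [Hr Hmax]]; exists r; rewrite is_Kdist_Ksym in *; split; auto.
  - intros q' r' H; apply (Hmax (f q')); now apply is_Kdist_Ksym.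
  - intros q' r' H; apply (Hmax (g q')); apply is_Kdist_Ksym; now rewrite fg.
Qed.

Lemma nsegs_Ksym p q k : nsegs a b (f p) (f q) k <-> nsegs a b p q k.
Proof.
  split; intros [r [Hr Hc]]; exists r; rewrite is_Kdist_Ksym in *; split; auto.
  - refine (has_card_bij g f _ _ k fg gf _ Hc).
    intros w; now rewrite orbitK_f, edist_f.
  - refine (has_card_bij f g _ _ k gf fg _ Hc).
    intros w; now rewrite <- (orbitK_f q), <- (edist_f p), fg.
Qed.

Lemma Fcase_Ksym p N k : Fcase a b (f p) N k <-> Fcase a b p N k.
Proof.
  assert (Fp : forall q, farthest a b (f p) q <-> farthest a b p (g q))
    by (intros q; now rewrite <- (farthest_Ksym p (g q)), fg).
  assert (Np : forall q, nsegs a b (f p) q k <-> nsegs a b p (g q) k)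
    by (intros q; now rewrite <- (nsegs_Ksym p (g q)), fg).
  split; intros [H1 H2]; split.
  - apply (count_classes_map a b g f (farthest a b (f p))); auto using orbitK_Ksym_inv;
      intros u Hu; apply Fp; now rewrite ?gf.
  - apply (count_classes_map a b g f (Fpk a b (f p) k)); auto using orbitK_Ksym_inv;
      intros u [Hu1 Hu2]; split; first [apply Fp | apply Np]; now rewrite ?gf.
  - apply (count_classes_map a b f g (farthest a b p)); auto;
      intros u Hu; apply Fp; now rewrite ?gf.
  - apply (count_classes_map a b f g (Fpk a b p k)); auto;
      intros u [Hu1 Hu2]; split; first [apply Fp | apply Np]; now rewrite ?gf.
Qed.

Lemma is_dsigma_Ksym p r : is_dsigma a b (f p) r <-> is_dsigma a b p r.
Proof.
  assert (E : forall x, (exists q, on_sigma b q /\ is_Kdist a b (f p) q x) <->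
                        (exists q, on_sigma b q /\ is_Kdist a b p q x)).
  { intros x; split; intros [q [Hq Hd]].
    - exists (g q); rewrite <- (sym_on_sigma _ _ _ _ S), <- is_Kdist_Ksym, fg; auto.
    - exists (f q); rewrite (sym_on_sigma _ _ _ _ S), is_Kdist_Ksym; auto. }
  unfold is_dsigma, is_glb; split; intros [H1 H2]; split.
  - intros x Hx; now apply H1, E.
  - intros s Hs; apply H2; intros x Hx; now apply Hs, E.
  - intros x Hx; now apply H1, E.
  - intros s Hs; apply H2; intros x Hx; now apply Hs, E.
Qed.

End KSymmetry.

Definition bsign (s : bool) : R := if s then 1 else -1.

(* (x, y) |-> (+-x + t, +-y + k b/2) normalizes G and preserves the lines y = n b/2,
   so it descends to an isometry of K_{a,b} preserving sigma. *)
Definition Kmap (b : R) (sx sy : bool) (t : R) (k : Z) (u : R * R) : R * R :=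
  (bsign sx * fst u + t, bsign sy * snd u + IZR k * b / 2).

Lemma Kmap_orbitK a b sx sy t k v y :
  orbitK a b v y -> orbitK a b (Kmap b sx sy t k v) (Kmap b sx sy t k y).
Proof.
  intros [m [n ->]].
  exists (if sx then m else - m)%Z,
         (if Z.even m then (if sy then n else - n) else (if sy then n else - n) + k)%Z.
  destruct v as [x y]; unfold Kmap, actK, sgnZ, bsign; simpl.
  destruct sx; rewrite ?Z.even_opp; destruct (Z.even m), sy; simpl;
    f_equal; rewrite ?plus_IZR, ?opp_IZR; field.
Qed.

Lemma Kmap_on_sigma b sx sy t k q : on_sigma b q -> on_sigma b (Kmap b sx sy t k q).
Proof.
  intros [n Hn]; exists ((if sy then n else - n) + k)%Z.
  destruct q; unfold Kmap, bsign; simpl in *; rewrite Hn.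
  destruct sy; rewrite ?plus_IZR, ?opp_IZR; field.
Qed.

Lemma Kmap_symmetry a b sx sy t k :
  Ksymmetry a b (Kmap b sx sy t k) (Kmap b sx sy (- (bsign sx * t)) (if sy then - k else k)%Z).
Proof.
  set (g := Kmap b sx sy (- (bsign sx * t)) (if sy then - k else k)%Z).
  assert (gf : forall u, g (Kmap b sx sy t k u) = u).
  { intros [x y]; unfold g, Kmap, bsign; destruct sx, sy; simpl; f_equal;
      rewrite ?opp_IZR; field. }
  assert (fg : forall u, Kmap b sx sy t k (g u) = u).
  { intros [x y]; unfold g, Kmap, bsign; destruct sx, sy; simpl; f_equal;
      rewrite ?opp_IZR; field. }
  split; auto.
  - intros [x y] [x' y']; unfold edist, Kmap, bsign; destruct sx, sy; simpl; f_equal; ring.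
  - intros u v; split; [|apply Kmap_orbitK].
    intros H; rewrite <- (gf u), <- (gf v); now apply Kmap_orbitK.
  - intros q; split; [|apply Kmap_on_sigma].
    intros H; rewrite <- (gf q); now apply Kmap_on_sigma.
Qed.

Lemma is_Kdist_orbitK a b p q q' r :
  orbitK a b q q' -> is_Kdist a b p q r -> is_Kdist a b p q' r.
Proof.
  intros O [[w [Ow Dw]] Hmin]; split.
  - exists w; split; [|exact Dw]; apply orbitK_trans with q; [now apply orbitK_sym | exact Ow].
  - intros w' Ow'; apply Hmin; now apply orbitK_trans with q'.
Qed.

Lemma nsegs_orbitK a b p q q' k : orbitK a b q q' -> nsegs a b p q k -> nsegs a b p q' k.
Proof.
  intros O [r [Hr Hc]]; exists r; split; [now apply is_Kdist_orbitK with q|].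
  refine (has_card_bij (fun u => u) (fun u => u) _ _ k (fun _ => eq_refl) (fun _ => eq_refl) _ Hc).
  intros w; split; intros [Ow Dw]; split; auto.
  - now apply orbitK_trans with q'.
  - apply orbitK_trans with q; [now apply orbitK_sym | exact Ow].
Qed.

Lemma is_Kdist_nsegs_Ksym_image a b f g p v v' r k :
  Ksymmetry a b f g -> f p = p -> orbitK a b (f v) v' ->
  is_Kdist a b p v r /\ nsegs a b p v k -> is_Kdist a b p v' r /\ nsegs a b p v' k.
Proof.
  intros S Hp Ov [Hd Hn]; split.
  - apply is_Kdist_orbitK with (f v); [exact Ov|]; rewrite <- Hp; now apply is_Kdist_Ksym with g.
  - apply nsegs_orbitK with (f v); [exact Ov|]; rewrite <- Hp; now apply nsegs_Ksym with g.
Qed.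

Lemma normal_form a b p : 0 < b ->
  exists f g y0, Ksymmetry a b f g /\ f p = (0, y0) /\ 0 <= y0 <= b / 4.
Proof.
  intros Hb; destruct p as [px py]; simpl.
  destruct (exists_floor py (b / 2) ltac:(lra)) as [j Hj].
  destruct (Rle_dec (py - IZR j * (b / 2)) (b / 4)) as [C|C].
  - eexists _, _, (py - IZR j * (b / 2)).
    split; [apply (Kmap_symmetry a b true true (- px) (- j))|]; split; [|lra].
    unfold Kmap, bsign; simpl; rewrite opp_IZR; f_equal; field.
  - eexists _, _, (b / 2 - (py - IZR j * (b / 2))).
    split; [apply (Kmap_symmetry a b true false (- px) (j + 1))|]; split; [|lra].
    unfold Kmap, bsign; simpl; rewrite plus_IZR; f_equal; field.
Qed.

Lemma is_glb_unique E r r' : is_glb E r -> is_glb E r' -> r = r'.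
Proof. intros [H1 H2] [H1' H2']; apply Rle_antisym; auto. Qed.

Lemma on_sigma_orbitK a b q w : on_sigma b q -> orbitK a b q w -> on_sigma b w.
Proof.
  intros [N HN] [m [n ->]]; exists ((if Z.even m then N else - N) + 2 * n)%Z.
  unfold actK, sgnZ; cbn [snd]; rewrite HN, plus_IZR, mult_IZR.
  destruct (Z.even m); rewrite ?opp_IZR; field.
Qed.

Lemma on_sigma_edist_ge b y0 w : 0 < b -> 0 <= y0 <= b / 4 -> on_sigma b w ->
  y0 <= edist (0, y0) w.
Proof.
  intros Hb Hy [N HN]; apply edist_ge; [lra|]; unfold d2; simpl; rewrite HN.
  assert (y0 ^ 2 <= (y0 - IZR N * b / 2) ^ 2).
  { apply sqr_le_of_abs_le; [lra|].
    destruct (Z.le_gt_cases N 0) as [H|H].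
    - apply IZR_le in H; left; nra.
    - apply Zlt_le_succ, IZR_le in H; right; simpl in H; nra. }
  pose proof (pow2_ge_0 (0 - fst w)); lra.
Qed.

Lemma is_dsigma_normal a b y0 : 0 < b -> 0 <= y0 <= b / 4 -> is_dsigma a b (0, y0) y0.
Proof.
  intros Hb Hy; split.
  - intros x [q [Hq [[w [Hw <-]] _]]].
    apply (on_sigma_edist_ge b); auto; now apply (on_sigma_orbitK a b q).
  - intros s Hs; apply Hs; exists (0, 0); split; [exists 0%Z; simpl; lra|]; split.
    + exists (0, 0); split; [apply orbitK_refl|]. apply edist_eq; [lra|]; unfold d2; simpl; ring.
    + intros w Hw; apply (on_sigma_edist_ge b); auto.
      apply (on_sigma_orbitK a b (0, 0)); auto; exists 0%Z; simpl; lra.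
Qed.

(** * Farthest points and inscribed triangles *)

Definition orient (u v w : R * R) : R :=
  (fst v - fst u) * (snd w - snd u) - (snd v - snd u) * (fst w - fst u).

Definition in_triangle (q u v w : R * R) : Prop :=
  0 <= orient q v w /\ 0 <= orient q w u /\ 0 <= orient q u v.

(* The weights orient q P2 P3, orient q P3 P1, orient q P1 P2 are barycentric
   coordinates of q, and |q-P|^2 - |P-V|^2 + |q-V|^2 = 2 (q-P).(q-V) is affine in P:
   so the weighted sum of these quantities over the three vertices vanishes. *)
Lemma inscribed_triangle_power P1 P2 P3 V rho2 q :
  d2 P1 V = rho2 -> d2 P2 V = rho2 -> d2 P3 V = rho2 ->
  0 < orient P1 P2 P3 -> in_triangle q P1 P2 P3 ->
  exists P, (P = P1 \/ P = P2 \/ P = P3) /\ d2 q P <= rho2 - d2 q V.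
Proof.
  intros H1 H2 H3 Hpos [C1 [C2 C3]].
  assert (Z : orient q P2 P3 * (d2 q P1 - d2 P1 V + d2 q V)
            + orient q P3 P1 * (d2 q P2 - d2 P2 V + d2 q V)
            + orient q P1 P2 * (d2 q P3 - d2 P3 V + d2 q V) = 0).
  { destruct P1, P2, P3, V, q; unfold orient, d2; simpl; ring. }
  assert (S : orient q P2 P3 + orient q P3 P1 + orient q P1 P2 = orient P1 P2 P3).
  { destruct P1, P2, P3, q; unfold orient; simpl; ring. }
  rewrite H1, H2, H3 in Z.
  destruct (Rle_dec (d2 q P1) (rho2 - d2 q V)) as [A|A]; [exists P1; auto|].
  destruct (Rle_dec (d2 q P2) (rho2 - d2 q V)) as [B|B]; [exists P2; auto|].
  destruct (Rle_dec (d2 q P3) (rho2 - d2 q V)) as [D|D]; [exists P3; auto|].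
  exfalso.
  assert (Q1 : 0 <= orient q P2 P3 * (d2 q P1 - rho2 + d2 q V)) by (apply Rmult_le_pos; lra).
  assert (Q2 : 0 <= orient q P3 P1 * (d2 q P2 - rho2 + d2 q V)) by (apply Rmult_le_pos; lra).
  assert (Q3 : 0 <= orient q P1 P2 * (d2 q P3 - rho2 + d2 q V)) by (apply Rmult_le_pos; lra).
  assert (E1 : orient q P2 P3 = 0)
    by (destruct (Rmult_integral (orient q P2 P3) (d2 q P1 - rho2 + d2 q V)); lra).
  assert (E2 : orient q P3 P1 = 0)
    by (destruct (Rmult_integral (orient q P3 P1) (d2 q P2 - rho2 + d2 q V)); lra).
  assert (E3 : orient q P1 P2 = 0)
    by (destruct (Rmult_integral (orient q P1 P2) (d2 q P3 - rho2 + d2 q V)); lra).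
  lra.
Qed.

Definition power_covered a b p V rho2 q : Prop :=
  exists P, orbitK a b p P /\ d2 q P <= rho2 - d2 q V.

Lemma inscribed_triangle_covers a b p P1 P2 P3 V rho2 q :
  orbitK a b p P1 -> orbitK a b p P2 -> orbitK a b p P3 ->
  d2 P1 V = rho2 -> d2 P2 V = rho2 -> d2 P3 V = rho2 ->
  0 < orient P1 P2 P3 -> in_triangle q P1 P2 P3 ->
  power_covered a b p V rho2 q.
Proof.
  intros O1 O2 O3 H1 H2 H3 Hpos Hq.
  destruct (inscribed_triangle_power P1 P2 P3 V rho2 q) as [P [HP Hd]]; auto.
  exists P; split; [|exact Hd]; now destruct HP as [-> | [-> | ->]].
Qed.

Lemma orbitK_d2_transport a b p P q : orbitK a b p P ->
  exists w, orbitK a b q w /\ d2 p w = d2 q P.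
Proof.
  intros HP; destruct (orbitK_sym a b p P HP) as [m [n ->]].
  exists (actK a b m n q); split; [apply orbitK_act|].
  now rewrite d2_sym, d2_actK.
Qed.

Lemma orbitK_fundamental_rect a b c q : 0 < a -> 0 < b ->
  exists w, orbitK a b q w /\ 0 <= fst w <= a /\ c <= snd w <= c + b.
Proof.
  intros Ha Hb; destruct (exists_floor (fst q) a Ha) as [m Hm].
  destruct (exists_floor (sgnZ (- m) (snd q) - c) b Hb) as [n Hn].
  exists (actK a b (- m) (- n) q); split; [apply orbitK_act|].
  unfold actK; simpl; rewrite !opp_IZR; lra.
Qed.

Definition covering a b p Rr (cands : list (R * R)) : Prop :=
  forall q, (exists w, orbitK a b q w /\ edist p w <= Rr) /\
    ((forall w, orbitK a b q w -> Rr <= edist p w) ->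
       exists v, In v cands /\ equivK a b q v).

Lemma covering_of_vertices a b p c Rr cands (verts : list ((R * R) * R)) :
  0 < a -> 0 < b -> 0 <= Rr ->
  (forall V rho2, In (V, rho2) verts ->
     rho2 <= Rr ^ 2 /\ (rho2 = Rr ^ 2 -> exists v, In v cands /\ orbitK a b V v)) ->
  (forall q, 0 <= fst q <= a -> c <= snd q <= c + b ->
     exists V rho2, In (V, rho2) verts /\ power_covered a b p V rho2 q) ->
  covering a b p Rr cands.
Proof.
  intros Ha Hb HRr Hverts Hrect q.
  destruct (orbitK_fundamental_rect a b c q Ha Hb) as [q' [Oq' [Hx Hy]]].
  destruct (Hrect q' Hx Hy) as [V [rho2 [HV [P [OP HP]]]]].
  destruct (Hverts V rho2 HV) as [Hrho Hfar].
  destruct (orbitK_d2_transport a b p P q' OP) as [w [Ow Dw]].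
  assert (Oqw : orbitK a b q w) by (apply orbitK_trans with q'; auto).
  pose proof (d2_ge0 q' V).
  split.
  - exists w; split; [exact Oqw|]; apply edist_le; lra.
  - intros Hall; specialize (Hall w Oqw); apply edist_ge in Hall; [|exact HRr].
    destruct Hfar as [v [Hv OV]]; [lra|].
    assert (E : q' = V) by (apply d2_eq0; lra); subst V.
    exists v; split; [exact Hv|]; apply orbitK_trans with q'; auto.
Qed.

Lemma covering_cands_orbitK a b p Rr cands cands' :
  (forall v, In v cands -> exists v', In v' cands' /\ orbitK a b v v') ->
  covering a b p Rr cands -> covering a b p Rr cands'.
Proof.
  intros Hsub Cov q; destruct (Cov q) as [Hle Hfar]; split; [exact Hle|].
  intros Hall; destruct (Hfar Hall) as [v [Hv Oqv]].
  destruct (Hsub v Hv) as [v' [Hv' Ov']].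
  exists v'; split; [exact Hv'|]; now apply orbitK_trans with v.
Qed.

Lemma Fcase_of_covering a b p Rr cands N k :
  covering a b p Rr cands ->
  (forall v, In v cands -> is_Kdist a b p v Rr /\ nsegs a b p v k) ->
  ForallOrdPairs (fun u v => ~ equivK a b u v) cands -> length cands = N -> cands <> nil ->
  Fcase a b p N k.
Proof.
  intros Cov Hc Hdist HN Hne.
  assert (Far : forall v, In v cands -> farthest a b p v).
  { intros v Hv; exists Rr; split; [apply Hc, Hv|].
    intros q' r' [_ Hmin]; destruct (Cov q') as [[w [Ow Dw]] _].
    specialize (Hmin w Ow); lra. }
  assert (Cls : forall q, farthest a b p q -> exists v, In v cands /\ equivK a b q v).
  { intros q [r [[_ Hmin] Hmax]]; apply (Cov q).
    destruct cands as [|v0 l0]; [congruence|].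
    assert (Rr <= r) by (apply (Hmax v0), Hc; now left).
    intros w Ow; specialize (Hmin w Ow); lra. }
  split; exists cands; repeat split; auto.
  - now apply Hc.
  - intros u [Hu _]; now apply Cls.
Qed.

Lemma nsegs_of_lifts a b p v r (L : list (Z * Z)) : 0 < a -> 0 < b -> 0 <= r ->
  (forall m n, r ^ 2 <= d2 p (actK a b m n v)) ->
  (forall m n, d2 p (actK a b m n v) = r ^ 2 -> In (m, n) L) ->
  Forall (fun mn => d2 p (actK a b (fst mn) (snd mn) v) = r ^ 2) L ->
  NoDup L -> L <> nil ->
  is_Kdist a b p v r /\ nsegs a b p v (length L).
Proof.
  intros Ha Hb Hr Hge Hin Hon HL Hne.
  rewrite Forall_forall in Hon.
  assert (K : is_Kdist a b p v r).
  { split.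
    - destruct L as [|mn L']; [congruence|].
      exists (actK a b (fst mn) (snd mn) v); split; [apply orbitK_act|].
      apply edist_eq; [exact Hr|]; apply Hon; now left.
    - intros w [m [n ->]]; apply edist_ge; auto. }
  split; [exact K|]; exists r; split; [exact K|].
  exists (map (fun mn => actK a b (fst mn) (snd mn) v) L); split; [|split].
  - apply NoDup_map_NoDup_ForallPairs; [|exact HL].
    intros [m n] [m' n'] _ _ E; simpl in E; apply actK_inj in E as [-> ->]; auto.
  - now rewrite length_map.
  - intros w; rewrite in_map_iff; split.
    + intros [[m [n ->]] Dw]; exists (m, n); split; [reflexivity|].
      apply Hin, edist_eq; auto.
    + intros [mn [<- Hmn]]; split; [apply orbitK_act|].
      apply edist_eq; [exact Hr|]; now apply Hon.
Qed.

Ltac triangle_tac :=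
  try apply orbitK_act; unfold in_triangle, orient, d2, actK, sgnZ; cbn -[IZR];
  repeat split; nra.

Ltac nodup_tac := repeat constructor; simpl; intuition congruence.

(** * The case 2 y0 (b - 2 y0) <= a^2 *)

(* (X, y0 + b/2) is the circumcentre of the lifts (0, y0), (a, b - y0), (0, y0 + b)
   of p, and (a - X, b/2 - y0) that of (0, y0), (a, -y0), (a, b - y0). *)
Section RegimeA.

Variables (a b y0 X : R).
Hypotheses (Ha : 0 < a) (Hb : 0 < b) (Hy0 : 0 <= y0 <= b / 4)
  (HX : 2 * a * X = a ^ 2 - 2 * y0 * (b - 2 * y0)) (HX0 : 0 <= X).

Lemma X_le_half_a : X <= a / 2.
Proof. nra. Qed.

Lemma on_circleA : (a - X) ^ 2 + (b / 2 - 2 * y0) ^ 2 = X ^ 2 + b ^ 2 / 4.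
Proof. nra. Qed.

Lemma rect_coveredA q : 0 <= fst q <= a -> y0 <= snd q <= y0 + b ->
  exists V rho2,
    In (V, rho2) (((a - X, b / 2 - y0), X ^ 2 + b ^ 2 / 4)
                  :: ((X, y0 + b / 2), X ^ 2 + b ^ 2 / 4)
                  :: ((a - X, 3 * b / 2 - y0), X ^ 2 + b ^ 2 / 4) :: nil) /\
    power_covered a b (0, y0) V rho2 q.
Proof.
  pose proof on_circleA.
  destruct q as [x y]; simpl; intros Hx Hy.
  destruct (Rle_dec 0 ((a - x) * (y0 - y) + x * (b - y0 - y))) as [T1|T1].
  - exists (a - X, b / 2 - y0), (X ^ 2 + b ^ 2 / 4); split; [simpl; auto|].
    apply (inscribed_triangle_covers a b (0, y0) (actK a b 0 0 (0, y0))
             (actK a b 1 0 (0, y0)) (actK a b 1 1 (0, y0))); triangle_tac.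
  - destruct (Rle_dec 0 ((a - x) * (y0 + b - y) + x * (b - y0 - y))) as [T2|T2].
    + exists (X, y0 + b / 2), (X ^ 2 + b ^ 2 / 4); split; [simpl; auto|].
      apply (inscribed_triangle_covers a b (0, y0) (actK a b 0 0 (0, y0))
               (actK a b 1 1 (0, y0)) (actK a b 0 1 (0, y0))); triangle_tac.
    + exists (a - X, 3 * b / 2 - y0), (X ^ 2 + b ^ 2 / 4); split; [simpl; auto|].
      apply (inscribed_triangle_covers a b (0, y0) (actK a b 0 1 (0, y0))
               (actK a b 1 1 (0, y0)) (actK a b 1 2 (0, y0))); triangle_tac.
Qed.

Lemma d2_lifts_farA m n :
  let D := d2 (0, y0) (actK a b m n (X, y0 + b / 2)) in
  X ^ 2 + b ^ 2 / 4 <= D /\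
  (D = X ^ 2 + b ^ 2 / 4 ->
     (m = 0%Z /\ (n = 0%Z \/ n = (-1)%Z)) \/ (m = (-1)%Z /\ n = 1%Z) \/
     (m = 1%Z /\ n = 1%Z /\ X = 0) \/ (m = (-1)%Z /\ n = 0%Z /\ y0 = 0)).
Proof.
  pose proof X_le_half_a; pose proof on_circleA.
  destruct (Z.Even_or_Odd m) as [[k ->]|[k ->]]; cbv zeta.
  - rewrite actK_even; unfold d2; cbn [fst snd].
    replace ((0 - (X + IZR k * (2 * a))) ^ 2) with ((X + IZR k * (2 * a)) ^ 2) by ring.
    replace ((y0 - (y0 + b / 2 + IZR n * b)) ^ 2) with ((b / 2 + IZR n * b) ^ 2) by ring.
    destruct (sqr_shift_ge X (2 * a) k) as [Lx Ex]; [lra | lra |].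
    destruct (sqr_shift_ge (b / 2) b n) as [Ly Ey]; [lra | lra |].
    split; [lra|]; intros E.
    destruct (Ex ltac:(lra)) as [-> | [_ HXa]]; [|lra].
    left; split; [reflexivity|].
    destruct (Ey ltac:(lra)) as [-> | [-> _]]; auto.
  - rewrite actK_odd; unfold d2; cbn [fst snd].
    replace ((0 - (X + a + IZR k * (2 * a))) ^ 2)
      with ((a - X + IZR (- k - 1) * (2 * a)) ^ 2) by (rewrite minus_IZR, opp_IZR; ring).
    replace ((y0 - (- (y0 + b / 2) + IZR n * b)) ^ 2)
      with ((b / 2 - 2 * y0 + IZR (n - 1) * b) ^ 2) by (rewrite minus_IZR; field).
    destruct (sqr_shift_ge (a - X) (2 * a) (- k - 1)) as [Lx Ex]; [lra | lra |].
    destruct (sqr_shift_ge (b / 2 - 2 * y0) b (n - 1)) as [Ly Ey]; [lra | lra |].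
    split; [lra|]; intros E.
    destruct (Ex ltac:(lra)) as [Hk | [Hk HX']];
      destruct (Ey ltac:(lra)) as [Hn | [Hn Hy']].
    + right; left; split; lia.
    + right; right; right; repeat split; [lia | lia | lra].
    + right; right; left; repeat split; [lia | lia | lra].
    + exfalso; nra.
Qed.

Lemma coveringA :
  covering a b (0, y0) (sqrt (X ^ 2 + b ^ 2 / 4)) ((X, y0 + b / 2) :: (a - X, b / 2 - y0) :: nil).
Proof.
  refine (covering_of_vertices a b (0, y0) y0 _ _ _ Ha Hb (sqrt_pos _) _ rect_coveredA).
  rewrite pow2_sqrt by nra; intros V rho2 HV; simpl in HV.
  destruct HV as [E|[E|[E|[]]]]; injection E as <- <-; split; try lra; intros _.
  - exists (a - X, b / 2 - y0); split; [simpl; auto | apply orbitK_refl].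
  - exists (X, y0 + b / 2); split; [simpl; auto | apply orbitK_refl].
  - exists (a - X, b / 2 - y0); split; [simpl; auto|].
    apply orbitK_sym; exists 0%Z, 1%Z; unfold actK, sgnZ; simpl; f_equal; lra.
Qed.

Ltac lifts_tac :=
  match goal with
  | |- forall m n, _ <= _ => intros m n; rewrite pow2_sqrt by nra; apply d2_lifts_farA
  | |- Forall _ _ =>
      rewrite pow2_sqrt by nra; repeat constructor;
      unfold d2, actK, sgnZ; cbn -[IZR]; nra
  | |- NoDup _ => nodup_tac
  | |- _ <> nil => discriminate
  | |- 0 <= sqrt _ => apply sqrt_pos
  | |- _ => assumption
  end.

Lemma Fcase_A_axis : y0 = 0 -> Fcase a b (0, y0) 1 4.
Proof.
  intros Hy; assert (HXa : X = a / 2) by nra.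
  apply (Fcase_of_covering a b _ (sqrt (X ^ 2 + b ^ 2 / 4)) ((X, y0 + b / 2) :: nil));
    [| | constructor; constructor | reflexivity | discriminate].
  - refine (covering_cands_orbitK _ _ _ _ _ _ _ coveringA).
    replace (a - X, b / 2 - y0) with (X, y0 + b / 2) by (f_equal; lra).
    intros v Hv; exists (X, y0 + b / 2); split; [now left|].
    simpl in Hv; destruct Hv as [<- | [<- | []]]; apply orbitK_refl.
  - intros v [<- | []].
    apply (nsegs_of_lifts a b _ _ _ ((0, 0) :: (0, -1) :: (-1, 1) :: (-1, 0) :: nil)%Z);
      try lifts_tac.
    intros m n E; rewrite pow2_sqrt in E by nra.
    destruct (proj2 (d2_lifts_farA m n) E)
      as [[-> [-> | ->]] | [[-> ->] | [[-> [-> HX0']] | [-> [-> Hy0']]]]]; simpl; auto 10; lra.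
Qed.

Lemma Fcase_A_generic : 0 < y0 -> 0 < X -> Fcase a b (0, y0) 2 3.
Proof.
  intros Hy HXp; assert (HXa : X < a / 2) by nra.
  assert (V1 : is_Kdist a b (0, y0) (X, y0 + b / 2) (sqrt (X ^ 2 + b ^ 2 / 4)) /\
               nsegs a b (0, y0) (X, y0 + b / 2) 3).
  { apply (nsegs_of_lifts a b _ _ _ ((0, 0) :: (0, -1) :: (-1, 1) :: nil)%Z); try lifts_tac.
    intros m n E; rewrite pow2_sqrt in E by nra.
    destruct (proj2 (d2_lifts_farA m n) E)
      as [[-> [-> | ->]] | [[-> ->] | [[-> [-> HX0']] | [-> [-> Hy0']]]]]; simpl; auto 10; lra. }
  apply (Fcase_of_covering a b _ _ _ _ _ coveringA); [| | reflexivity | discriminate].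
  - intros v [<- | [<- | []]]; [exact V1|].
    refine (is_Kdist_nsegs_Ksym_image a b _ _ _ _ _ _ _
              (Kmap_symmetry a b false true 0 0) _ _ V1).
    + unfold Kmap, bsign; simpl; f_equal; lra.
    + exists 1%Z, 1%Z; unfold Kmap, bsign, actK, sgnZ; simpl; f_equal; lra.
  - repeat constructor; apply not_orbitK_shift_fst; simpl; lra.
Qed.

Lemma Fcase_A_corner : 0 < y0 -> X = 0 -> Fcase a b (0, y0) 1 4.
Proof.
  intros Hy HX0'.
  apply (Fcase_of_covering a b _ (sqrt (X ^ 2 + b ^ 2 / 4)) ((X, y0 + b / 2) :: nil));
    [| | constructor; constructor | reflexivity | discriminate].
  - refine (covering_cands_orbitK _ _ _ _ _ _ _ coveringA).
    intros v Hv; exists (X, y0 + b / 2); split; [now left|].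
    simpl in Hv; destruct Hv as [<- | [<- | []]]; [apply orbitK_refl|].
    apply orbitK_sym; exists 1%Z, 1%Z; unfold actK, sgnZ; simpl; f_equal; lra.
  - intros v [<- | []].
    apply (nsegs_of_lifts a b _ _ _ ((0, 0) :: (0, -1) :: (-1, 1) :: (1, 1) :: nil)%Z);
      try lifts_tac.
    intros m n E; rewrite pow2_sqrt in E by nra.
    destruct (proj2 (d2_lifts_farA m n) E)
      as [[-> [-> | ->]] | [[-> ->] | [[-> [-> HX0'']] | [-> [-> Hy0']]]]]; simpl; auto 10; lra.
Qed.

End RegimeA.

(** * The case a^2 < 2 y0 (b - 2 y0) *)

(* (0, y0 + RW) is the circumcentre of the lifts (0, y0), (a, b - y0), (-a, b - y0)
   of p, and (0, y0 + b - RW') that of (0, y0 + b), (a, b - y0), (-a, b - y0). *)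
Section RegimeB.

Variables (a b y0 RW RW' : R).
Hypotheses (Ha : 0 < a) (Hb : 0 < b) (Hy0 : 0 < y0 <= b / 4)
  (Hu : a ^ 2 < 2 * y0 * (b - 2 * y0))
  (HW : 2 * (b - 2 * y0) * RW = a ^ 2 + (b - 2 * y0) ^ 2)
  (HW' : 4 * y0 * RW' = a ^ 2 + 4 * y0 ^ 2).

Lemma RW_bounds : 0 < RW < b / 2 /\ 0 < b - 2 * y0 - RW < b / 2.
Proof. repeat split; nra. Qed.

Lemma on_circleB : a ^ 2 + (b - 2 * y0 - RW) ^ 2 = RW ^ 2.
Proof. nra. Qed.

Lemma RW'_le_RW : 0 < RW' <= RW /\ (RW' = RW -> y0 = b / 4).
Proof.
  assert (E : 2 * (b - 2 * y0) * (2 * y0) * (RW - RW') =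
              (b - 4 * y0) * (2 * y0 * (b - 2 * y0) - a ^ 2)) by nra.
  repeat split; [nra | nra |].
  intros Eq; rewrite Eq in E; nra.
Qed.

Lemma rect_coveredB q : 0 <= fst q <= a -> y0 <= snd q <= y0 + b ->
  exists V rho2,
    In (V, rho2) (((a, b - y0 - RW), RW ^ 2) :: ((0, y0 + RW), RW ^ 2)
                  :: ((0, y0 + b - RW'), RW' ^ 2) :: ((a, b - y0 + RW'), RW' ^ 2) :: nil) /\
    power_covered a b (0, y0) V rho2 q.
Proof.
  destruct RW_bounds; destruct q as [x y]; simpl; intros Hx Hy.
  destruct (Rle_dec 0 ((a - x) * (y0 - y) + x * (b - y0 - y))) as [T1|T1].
  { exists (a, b - y0 - RW), (RW ^ 2); split; [simpl; auto|].
    apply (inscribed_triangle_covers a b (0, y0) (actK a b 0 0 (0, y0))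
             (actK a b 2 0 (0, y0)) (actK a b 1 1 (0, y0))); triangle_tac. }
  destruct (Rle_dec 0 (b - y0 - y)) as [T2|T2].
  { exists (0, y0 + RW), (RW ^ 2); split; [simpl; auto|].
    apply (inscribed_triangle_covers a b (0, y0) (actK a b 0 0 (0, y0))
             (actK a b 1 1 (0, y0)) (actK a b (-1) 1 (0, y0))); triangle_tac. }
  destruct (Rle_dec 0 ((a - x) * (y0 + b - y) + x * (b - y0 - y))) as [T3|T3].
  { exists (0, y0 + b - RW'), (RW' ^ 2); split; [simpl; auto 6|].
    apply (inscribed_triangle_covers a b (0, y0) (actK a b 0 1 (0, y0))
             (actK a b (-1) 1 (0, y0)) (actK a b 1 1 (0, y0))); triangle_tac. }
  exists (a, b - y0 + RW'), (RW' ^ 2); split; [simpl; auto 8|].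
  apply (inscribed_triangle_covers a b (0, y0) (actK a b 0 1 (0, y0))
           (actK a b 1 1 (0, y0)) (actK a b 2 1 (0, y0))); triangle_tac.
Qed.

Lemma coveringB cands : In (0, y0 + RW) cands -> (y0 = b / 4 -> In (0, y0 + b - RW') cands) ->
  covering a b (0, y0) RW cands.
Proof.
  intros HW1 HW2; destruct RW_bounds; destruct RW'_le_RW as [HRW' Heq].
  refine (covering_of_vertices a b (0, y0) y0 RW cands _ Ha Hb ltac:(lra) _ rect_coveredB).
  intros V rho2 HV; simpl in HV.
  destruct HV as [E|[E|[E|[E|[]]]]]; injection E as <- <-;
    (split; [nra|]); intros E.
  - exists (0, y0 + RW); split; [exact HW1|].
    apply orbitK_sym; exists 1%Z, 1%Z; unfold actK, sgnZ; simpl; f_equal; lra.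
  - exists (0, y0 + RW); split; [exact HW1 | apply orbitK_refl].
  - exists (0, y0 + b - RW'); split; [apply HW2, Heq; nra | apply orbitK_refl].
  - exists (0, y0 + b - RW'); split; [apply HW2, Heq; nra|].
    apply orbitK_sym; exists 1%Z, 2%Z; unfold actK, sgnZ; simpl; f_equal; lra.
Qed.

Lemma d2_lifts_farB m n :
  let D := d2 (0, y0) (actK a b m n (0, y0 + RW)) in
  RW ^ 2 <= D /\
  (D = RW ^ 2 -> (m = 0%Z /\ n = 0%Z) \/ (m = 1%Z /\ n = 1%Z) \/ (m = (-1)%Z /\ n = 1%Z)).
Proof.
  destruct RW_bounds; pose proof on_circleB.
  destruct (Z.Even_or_Odd m) as [[k ->]|[k ->]]; cbv zeta.
  - rewrite actK_even; unfold d2; cbn [fst snd].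
    replace ((0 - (0 + IZR k * (2 * a))) ^ 2) with ((0 + IZR k * (2 * a)) ^ 2) by ring.
    replace ((y0 - (y0 + RW + IZR n * b)) ^ 2) with ((RW + IZR n * b) ^ 2) by ring.
    destruct (sqr_shift_ge 0 (2 * a) k) as [Lx Ex]; [lra | lra |].
    destruct (sqr_shift_ge RW b n) as [Ly Ey]; [lra | lra |].
    split; [lra|]; intros E.
    destruct (Ex ltac:(lra)) as [-> | [_ Ha']]; [|lra].
    destruct (Ey ltac:(lra)) as [-> | [_ HRW]]; [|lra].
    left; split; reflexivity.
  - rewrite actK_odd; unfold d2; cbn [fst snd].
    replace ((0 - (0 + a + IZR k * (2 * a))) ^ 2) with ((a + IZR k * (2 * a)) ^ 2) by ring.
    replace ((y0 - (- (y0 + RW) + IZR n * b)) ^ 2)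
      with ((b - 2 * y0 - RW + IZR (n - 1) * b) ^ 2) by (rewrite minus_IZR; ring).
    destruct (sqr_shift_ge a (2 * a) k) as [Lx Ex]; [lra | lra |].
    destruct (sqr_shift_ge (b - 2 * y0 - RW) b (n - 1)) as [Ly Ey]; [lra | lra |].
    split; [lra|]; intros E.
    destruct (Ey ltac:(lra)) as [Hn | [_ Hz]]; [|lra].
    destruct (Ex ltac:(lra)) as [-> | [-> _]]; [right; left | right; right]; split; lia.
Qed.

Lemma nsegs_farB :
  is_Kdist a b (0, y0) (0, y0 + RW) RW /\ nsegs a b (0, y0) (0, y0 + RW) 3.
Proof.
  destruct RW_bounds.
  apply (nsegs_of_lifts a b _ _ _ ((0, 0) :: (1, 1) :: (-1, 1) :: nil)%Z);
    [lra | lra | lra | apply d2_lifts_farB | | | nodup_tac | discriminate].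
  - intros m n E; destruct (proj2 (d2_lifts_farB m n) E) as [[-> ->] | [[-> ->] | [-> ->]]];
      simpl; auto.
  - pose proof on_circleB; repeat constructor; unfold d2, actK, sgnZ; cbn -[IZR]; nra.
Qed.

Lemma Fcase_B_generic : y0 < b / 4 -> Fcase a b (0, y0) 1 3.
Proof.
  intros Hy.
  apply (Fcase_of_covering a b _ RW ((0, y0 + RW) :: nil));
    [| | constructor; constructor | reflexivity | discriminate].
  - apply coveringB; [now left | lra].
  - intros v [<- | []]; exact nsegs_farB.
Qed.

Lemma Fcase_B_quarter : y0 = b / 4 -> Fcase a b (0, y0) 2 3.
Proof.
  intros Hy; destruct RW_bounds; destruct RW'_le_RW as [HRW' _].
  assert (E : RW' = RW) by (subst y0; nra).
  apply (Fcase_of_covering a b _ RW ((0, y0 + RW) :: (0, y0 + b - RW') :: nil));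
    [| | | reflexivity | discriminate].
  - apply coveringB; [now left | intros _; right; now left].
  - intros v [<- | [<- | []]]; [exact nsegs_farB|].
    refine (is_Kdist_nsegs_Ksym_image a b _ _ _ _ _ _ _
              (Kmap_symmetry a b true false 0 1) _ _ nsegs_farB).
    + unfold Kmap, bsign; simpl; f_equal; lra.
    + exists 0%Z, 1%Z; unfold Kmap, bsign, actK, sgnZ; simpl; f_equal; lra.
  - repeat constructor; apply not_orbitK_shift_snd; simpl; lra.
Qed.

End RegimeB.

Lemma Fcase_normal a b y0 : 0 < a -> 0 < b -> 0 <= y0 <= b / 4 ->
  (y0 = 0 -> Fcase a b (0, y0) 1 4) /\
  (0 < y0 -> 2 * y0 * (b - 2 * y0) < a ^ 2 -> Fcase a b (0, y0) 2 3) /\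
  (0 < y0 -> 2 * y0 * (b - 2 * y0) = a ^ 2 -> Fcase a b (0, y0) 1 4) /\
  (y0 < b / 4 -> a ^ 2 < 2 * y0 * (b - 2 * y0) -> Fcase a b (0, y0) 1 3) /\
  (y0 = b / 4 -> a ^ 2 < 2 * y0 * (b - 2 * y0) -> Fcase a b (0, y0) 2 3).
Proof.
  intros Ha Hb Hy.
  set (X := (a ^ 2 - 2 * y0 * (b - 2 * y0)) / (2 * a)).
  assert (HX : 2 * a * X = a ^ 2 - 2 * y0 * (b - 2 * y0)) by (unfold X; field; lra).
  set (RW := (a ^ 2 + (b - 2 * y0) ^ 2) / (2 * (b - 2 * y0))).
  assert (HW : 2 * (b - 2 * y0) * RW = a ^ 2 + (b - 2 * y0) ^ 2) by (unfold RW; field; lra).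
  set (RW' := (a ^ 2 + 4 * y0 ^ 2) / (4 * y0)).
  assert (HW' : 0 < y0 -> 4 * y0 * RW' = a ^ 2 + 4 * y0 ^ 2) by (intros; unfold RW'; field; lra).
  split; [|split; [|split; [|split]]]; intros H1; try intros H2.
  - apply (Fcase_A_axis a b y0 X); auto; subst y0; nra.
  - apply (Fcase_A_generic a b y0 X); auto; nra.
  - apply (Fcase_A_corner a b y0 X); auto; nra.
  - apply (Fcase_B_generic a b y0 RW RW'); auto; nra.
  - apply (Fcase_B_quarter a b y0 RW RW'); auto; lra.
Qed.

Definition classification (a b r : R) (F : nat -> nat -> Prop) : Prop :=
  let lam := 2 * r / b in
  (0 <= lam <= 1 / 2) /\
  (b < 2 * a ->
     (lam = 0 -> F 1%nat 4%nat) /\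
     (lam <> 0 -> F 2%nat 3%nat)) /\
  (b = 2 * a ->
     (lam = 0 \/ lam = 1 / 2 -> F 1%nat 4%nat) /\
     (lam <> 0 /\ lam <> 1 / 2 -> F 2%nat 3%nat)) /\
  (b > 2 * a ->
     let lam0 := 1 / 2 - sqrt (1 / 4 - a ^ 2 / b ^ 2) in
     (lam = 0 -> F 1%nat 4%nat) /\
     (0 < lam < lam0 -> F 2%nat 3%nat) /\
     (lam = lam0 -> F 1%nat 4%nat) /\
     (lam0 < lam < 1 / 2 -> F 1%nat 3%nat) /\
     (lam = 1 / 2 -> F 2%nat 3%nat)).

Lemma classification_impl a b r (F F' : nat -> nat -> Prop) :
  (forall N k, F N k -> F' N k) -> classification a b r F -> classification a b r F'.
Proof. intros HF; unfold classification; cbv zeta; intuition auto. Qed.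

Lemma lam0_threshold a b : 0 < a -> 2 * a < b ->
  let s := sqrt (1 / 4 - a ^ 2 / b ^ 2) in
  0 < s < 1 / 2 /\
  forall lam, b ^ 2 * lam * (1 - lam) - a ^ 2 = b ^ 2 * (s ^ 2 - (1 / 2 - lam) ^ 2).
Proof.
  intros Ha Hab s.
  assert (Hpos : 0 < 1 / 4 - a ^ 2 / b ^ 2).
  { replace (1 / 4 - a ^ 2 / b ^ 2) with ((b ^ 2 - 4 * a ^ 2) / (4 * b ^ 2)) by (field; lra).
    apply Rdiv_lt_0_compat; nra. }
  assert (Hs2 : s ^ 2 = 1 / 4 - a ^ 2 / b ^ 2) by (apply pow2_sqrt; lra).
  assert (0 < a ^ 2 / b ^ 2) by (apply Rdiv_lt_0_compat; nra).
  split; [split; [apply sqrt_lt_R0; lra | nra] |].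
  intros lam; rewrite Hs2; field; lra.
Qed.

Lemma classification_normal a b y0 : 0 < a -> 0 < b -> 0 <= y0 <= b / 4 ->
  classification a b y0 (Fcase a b (0, y0)).
Proof.
  intros Ha Hb Hy.
  destruct (Fcase_normal a b y0 Ha Hb Hy) as (F1 & F2 & F3 & F4 & F5).
  unfold classification; cbv zeta; set (lam := 2 * y0 / b).
  assert (Ey : y0 = lam * b / 2) by (unfold lam; field; lra).
  clearbody lam; subst y0.
  assert (Hl : 0 <= lam <= 1 / 2) by (split; nra).
  assert (Uv : 2 * (lam * b / 2) * (b - 2 * (lam * b / 2)) = b ^ 2 * lam * (1 - lam)) by field.
  rewrite Uv in F2, F3, F4, F5.
  assert (Hq : lam * (1 - lam) <= 1 / 4) by nra.
  split; [exact Hl|]; split; [|split].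
  - intros Hab; split; intros H0; [apply F1; nra|].
    apply F2; nra.
  - intros Hab; split; [intros [H0|H0] | intros [H0 H1]].
    + apply F1; nra.
    + apply F3; subst lam; nra.
    + apply F2; [nra|].
      assert (0 < a ^ 2 * (1 / 2 - lam) ^ 2) by (apply Rmult_lt_0_compat; apply pow_lt; lra).
      subst b; nra.
  - intros Hab; destruct (lam0_threshold a b Ha Hab) as [Hs Key]; cbv zeta in *.
    set (s := sqrt (1 / 4 - a ^ 2 / b ^ 2)) in *; clearbody s.
    specialize (Key lam); assert (Hb2 : 0 < b ^ 2) by nra.
    split; [|split; [|split; [|split]]].
    + intros H0; apply F1; nra.
    + intros [H0 H1]; apply F2; [nra|].
      assert (s ^ 2 < (1 / 2 - lam) ^ 2) by nra. nra.
    + intros H0; apply F3; [nra|].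
      assert (s ^ 2 = (1 / 2 - lam) ^ 2) by (subst lam; ring). nra.
    + intros [H0 H1]; apply F4; [nra|].
      assert ((1 / 2 - lam) ^ 2 < s ^ 2) by nra. nra.
    + intros H0; apply F5; [nra|].
      subst lam; nra.
Qed.

Theorem mainTheorem4 (a b : R) (p : R * R) :
  0 < a -> 0 < b ->
  (exists r, is_dsigma a b p r) /\
  forall r, is_dsigma a b p r ->
    let lam := 2 * r / b in
    (0 <= lam <= 1 / 2) /\
    (b < 2 * a ->
       (lam = 0 -> Fcase a b p 1 4) /\
       (lam <> 0 -> Fcase a b p 2 3)) /\
    (b = 2 * a ->
       (lam = 0 \/ lam = 1 / 2 -> Fcase a b p 1 4) /\
       (lam <> 0 /\ lam <> 1 / 2 -> Fcase a b p 2 3)) /\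
    (b > 2 * a ->
       let lam0 := 1 / 2 - sqrt (1 / 4 - a ^ 2 / b ^ 2) in
       (lam = 0 -> Fcase a b p 1 4) /\
       (0 < lam < lam0 -> Fcase a b p 2 3) /\
       (lam = lam0 -> Fcase a b p 1 4) /\
       (lam0 < lam < 1 / 2 -> Fcase a b p 1 3) /\
       (lam = 1 / 2 -> Fcase a b p 2 3)).
Proof.
  intros Ha Hb.
  destruct (normal_form a b p Hb) as (f & g & y0 & S & Hfp & Hy0).
  assert (Hd : forall r, is_dsigma a b p r <-> r = y0).
  { intros r; rewrite <- (is_dsigma_Ksym a b f g S), Hfp; split.
    - intros Hr; apply (is_glb_unique _ _ _ Hr), is_dsigma_normal; lra.
    - intros ->; apply is_dsigma_normal; lra. }
  split; [exists y0; now apply Hd|].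
  intros r Hr; apply Hd in Hr; subst r.
  change (classification a b y0 (Fcase a b p)).
  apply (classification_impl a b y0 (Fcase a b (f p))).
  - intros N k; apply (Fcase_Ksym a b f g S).
  - rewrite Hfp; now apply classification_normal.
Qed.
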